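(* Let $n\ge2$, $\epsilon\in(0,1)$, let $Q^0\in\mathbb{S}^n$ with $Q^0_i>0$ for all $i$, let $\widehat{P}\in\mathbb{S}^n$ be fixed (not varying with $p$), take $\mathcal{Q}=\{Q^0\}$, and for each $p$ let $\alpha_{\mathrm{L}}=\alpha_{\mathrm{L}}(p)$ be as defined below. Then $$\alpha_{\mathrm{L}}\le\kappa(\widehat{P}\,\|\,Q^0)\qquad\text{and}\qquad\lim_{p\to\infty}\alpha_{\mathrm{L}}=\kappa(\widehat{P}\,\|\,Q^0).$$
   Context: $\mathbb{S}^n=\{P\in\mathbb{R}^n:\sum_iP_i=1,\ P_i\ge0\}$. $D(P\|Q)=\sum_iP_i\log(P_i/Q_i)$. The separation distance is $\kappa(P\|Q)=\max_{i\in[n]}\left(1-\frac{P_i}{Q_i}\right)$. For $\alpha\in[0,1]$ let $\mathcal{P}(\widehat{P},\alpha)=\{P\in\mathbb{S}^n: P_i\le \widehat{P}_i/(1-\alpha),\ i=1,\dots,n\}$ and $D^*_\alpha=\min_{P\in\mathcal{P}(\widehat{P},\alpha),\,Q\in\mathcal{Q}}D(P\|Q)=\min_{P\in\mathcal{P}(\widehat{P},\alpha)}D(P\|Q^0)$. Define $$\alpha_{\mathrm{L}}=\max\left\{\alpha:\ D^*_\alpha\ \ge\ \frac{1}{p(1-\alpha)}\log\left(\frac1\epsilon\right)+\frac{2n}{p(1-\alpha)}\log\big(p(1-\alpha)+1\big)\right\}.$$ *)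

From HB Require Import structures.
From mathcomp Require Import all_boot all_order all_algebra.
From mathcomp Require Import all_classical all_reals all_analysis.
Set Implicit Arguments. Unset Strict Implicit. Unset Printing Implicit Defensive.
Import Order.TTheory GRing.Theory Num.Theory.
Import numFieldNormedType.Exports.
Local Open Scope classical_set_scope.
Local Open Scope ring_scope.

Section Defs.
Variables (R : realType) (n : nat).

Definition simplex (P : 'I_n -> R) : Prop :=
  (forall i, 0 <= P i) /\ \sum_(i < n) P i = 1.

(** KL divergence D(P||Q) = sum_i P_i log(P_i/Q_i); note ln 0 = 0 in
    mathcomp-analysis, so terms with P_i = 0 contribute 0 (0 log 0 = 0). *)
Definition KL (P Q : 'I_n -> R) : R := \sum_(i < n) P i * ln (P i / Q i).

Definition kappa (P Q : 'I_n -> R) : R :=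
  sup [set 1 - P i / Q i | i in [set: 'I_n]].

Definition ambig (Phat : 'I_n -> R) (a : R) : set ('I_n -> R) :=
  [set P | simplex P /\ forall i, P i <= Phat i / (1 - a)].

Definition Dstar (Phat Q0 : 'I_n -> R) (a : R) : R :=
  inf [set KL P Q0 | P in ambig Phat a].

Definition rhsL (eps p a : R) : R :=
  (p * (1 - a))^-1 * ln (eps^-1)
  + (2 * n%:R) / (p * (1 - a)) * ln (p * (1 - a) + 1).

(** alpha_L(p) = max{alpha : D*_alpha >= rhs}; alpha ranges over [0,1)
    (at alpha = 1 the rhs is +infinity).  Written as a sup (equal to the max
    when the set is nonempty; sup of the empty set is 0 by convention). *)
Definition alphaL (Phat Q0 : 'I_n -> R) (eps p : R) : R :=
  sup [set a : R | 0 <= a < 1 /\ rhsL eps p a <= Dstar Phat Q0 a].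

End Defs.

From HB Require Import structures.
From mathcomp Require Import all_boot all_order all_algebra.
From mathcomp Require Import all_classical all_reals all_analysis.
From mathcomp Require Import ring lra.
Import Order.TTheory GRing.Theory Num.Theory.
Import numFieldNormedType.Exports.
Local Open Scope classical_set_scope.
Local Open Scope ring_scope.

(** The squared Hellinger distance bounds the KL divergence from below, and
    every [P] in the ambiguity set of radius [a < kappa] has a coordinate
    [P_j <= c Q0_j] with [c < 1] fixed by [Phat], [Q0] and [a]; so [D*_a] is
    bounded away from [0].  For [a >= kappa] the reference distribution [Q0]
    itself is admissible, so [D*_a = 0] lies below the (positive) right-hand
    side and [alpha_L <= kappa].  Since the right-hand side decays like
    [ln p / p], every [a < kappa] is admissible for large [p], which squeezes
    [alpha_L] to [kappa]. *)

Lemma ln_le_subr1 {R : realType} {y : R} : 0 < y -> ln y <= y - 1.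
Proof.
move=> y_gt0; have := @le_ln1Dx R (y - 1).
by rewrite addrCA subrr addr0; apply; rewrite ltrBrDl; lra.
Qed.

Lemma sup_ge0 {R : realType} (E : set R) :
  (forall x, E x -> 0 <= x) -> 0 <= sup E.
Proof.
move=> E_ge0; have [supE|/sup_out -> //] := pselect (has_sup E).
have [x Ex] := supE.1.
exact: le_trans (E_ge0 x Ex) (sup_upper_bound supE Ex).
Qed.

Lemma sup_le_ub_ge0 {R : realType} (E : set R) (b : R) :
  0 <= b -> ubound E b -> sup E <= b.
Proof.
move=> b_ge0 Eb.
by have [->|/set0P E_neq0] := eqVneq E set0; [rewrite sup0 | exact: ge_sup].
Qed.

Lemma cvg_from_below {R : realType} {T : Type} {F : set_system T}
    {FF : Filter F} (f : T -> R) (l : R) :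
  (\forall t \near F, f t <= l) ->
  (forall a, a < l -> \forall t \near F, a <= f t) -> f @ F --> l.
Proof.
move=> f_le_l f_near_l; apply/cvgrPdist_lt => e e_gt0.
have l_e : l - e / 2 < l by rewrite ltrBlDr ltrDl divr_gt0.
apply: filterS2 f_le_l (f_near_l _ l_e) => t ft_le ft_ge.
by rewrite ger0_norm ?subr_ge0 //; lra.
Qed.

Lemma ln1D_le_sqrt {R : realType} {s : R} :
  0 <= s -> ln (s + 1) <= 2 * Num.sqrt s.
Proof.
move=> s_ge0.
have r_gt0 : 0 < Num.sqrt (s + 1) by rewrite sqrtr_gt0; lra.
have -> : s + 1 = Num.sqrt (s + 1) ^+ 2 by rewrite sqr_sqrtr //; lra.
rewrite lnXn //.
have : Num.sqrt (s + 1) <= Num.sqrt s + 1.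
  rewrite -(ger0_norm (addr_ge0 (sqrtr_ge0 s) ler01)) -sqrtr_sqr.
  by apply: ler_wsqrtr; rewrite sqrrD1 sqr_sqrtr //; have := sqrtr_ge0 s; lra.
have := ln_le_subr1 r_gt0; rewrite mulr2n; lra.
Qed.

(* L / s + N ln (s + 1) / s <= d once s >= 2 L / d and sqrt s >= 4 N / d. *)
Lemma ln1D_div_near_le {R : realType} (L N d : R) : 0 <= L -> 0 <= N -> 0 < d ->
  \forall s \near +oo, s^-1 * L + N / s * ln (s + 1) <= d.
Proof.
move=> L_ge0 N_ge0 d_gt0.
have Ld_ge0 : 0 <= 2 * L / d by rewrite divr_ge0 ?mulr_ge0 // ltW.
have Nd_ge0 : 0 <= 4 * N / d by rewrite divr_ge0 ?mulr_ge0 // ltW.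
exists (2 * L / d + (4 * N / d) ^+ 2); split; first by rewrite num_real.
move=> s S_lt_s.
have Nd2_ge0 := sqr_ge0 (4 * N / d).
have s_gt0 : 0 < s by lra.
have es : Num.sqrt s ^+ 2 = s by rewrite sqr_sqrtr // ltW.
have L_le : 2 * L <= d * s by rewrite -ler_pdivrMl // mulrC; lra.
have N_le : 4 * N <= d * Num.sqrt s.
  rewrite -ler_pdivrMl // mulrC -(ger0_norm Nd_ge0) -sqrtr_sqr.
  by apply: ler_wsqrtr; lra.
have ln_le := ler_wpM2l N_ge0 (ln1D_le_sqrt (ltW s_gt0)).
have -> : s^-1 * L + N / s * ln (s + 1) = (L + N * ln (s + 1)) / s.
  by field; rewrite gt_eqF.
rewrite ler_pdivrMr //.
have := ler_wpM2r (sqrtr_ge0 s) N_le; rewrite -[d * _ * _]mulrA -expr2 es.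
lra.
Qed.

Lemma hellinger_le_mul_ln {R : realType} (P Q : R) : 0 <= P -> 0 < Q ->
  (Num.sqrt P - Num.sqrt Q) ^+ 2 + (P - Q) <= P * ln (P / Q).
Proof.
move=> P_ge0 Q_gt0.
have eQ := sqr_sqrtr (ltW Q_gt0); have eP := sqr_sqrtr P_ge0.
have sQ_gt0 : 0 < Num.sqrt Q by rewrite sqrtr_gt0.
have -> : (Num.sqrt P - Num.sqrt Q) ^+ 2 + (P - Q)
    = 2 * P - 2 * Num.sqrt P * Num.sqrt Q by rewrite sqrrB eP eQ; ring.
have [->|P_neq0] := eqVneq P 0; first by rewrite sqrtr0; lra.
have sP_gt0 : 0 < Num.sqrt P by rewrite sqrtr_gt0 lt_def P_neq0.
set r := Num.sqrt Q / Num.sqrt P.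
have r_gt0 : 0 < r by rewrite divr_gt0.
have eln : ln (P / Q) = - (ln r *+ 2).
  rewrite -lnXn // -lnV ?posrE ?exprn_gt0 //.
  by rewrite /r expr_div_n eP eQ invf_div.
have P_mul_r : P * r = Num.sqrt P * Num.sqrt Q.
  by rewrite /r -{1}eP; field; rewrite gt_eqF.
have := ln_le_subr1 r_gt0.
rewrite eln mulrN mulrnAr -mulNrn; nra.
Qed.

Lemma sqr_sqrt_gap_ge {R : realType} (P Q c : R) :
  0 <= P -> 0 < Q -> P <= c * Q -> c < 1 ->
  (1 - c) ^+ 2 * Q / 4 <= (Num.sqrt P - Num.sqrt Q) ^+ 2.
Proof.
move=> P_ge0 Q_gt0 PcQ c_lt1.
have eQ := sqr_sqrtr (ltW Q_gt0); have eP := sqr_sqrtr P_ge0.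
have sQ_gt0 : 0 < Num.sqrt Q by rewrite sqrtr_gt0.
have sP_ge0 : 0 <= Num.sqrt P by [].
set s := Num.sqrt Q in eQ sQ_gt0 *; set t := Num.sqrt P in eP sP_ge0 *.
rewrite -eQ -eP in PcQ; rewrite -eQ.
have ts2 : t ^+ 2 <= s ^+ 2.
  have : 0 <= (1 - c) * s ^+ 2 by rewrite mulr_ge0 ?sqr_ge0 // subr_ge0 ltW.
  lra.
have ts : t <= s by rewrite -ler_sqr ?nnegrE // ltW.
(* (1 - c) s^2 <= s^2 - t^2 = (s - t)(s + t) <= 2 s (s - t) *)
have gap : (1 - c) * s <= 2 * (s - t) by nra.
have : 0 <= (1 - c) * s by rewrite mulr_ge0 ?subr_ge0 ?ltW.
nra.
Qed.

Section KullbackLeibler.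
Context {R : realType} {n : nat} {Q : 'I_n -> R}.
Hypotheses (Q_gt0 : forall i, 0 < Q i) (sumQ1 : \sum_(i < n) Q i = 1).

Lemma KL_ge_hellinger (P : 'I_n -> R) : simplex P ->
  \sum_(i < n) (Num.sqrt (P i) - Num.sqrt (Q i)) ^+ 2 <= KL P Q.
Proof.
move=> [P_ge0 sumP1].
have : \sum_(i < n) ((Num.sqrt (P i) - Num.sqrt (Q i)) ^+ 2 + (P i - Q i))
    <= KL P Q by apply: ler_sum => i _; exact: hellinger_le_mul_ln.
by rewrite big_split /= sumrB sumP1 sumQ1 subrr addr0.
Qed.

Lemma KL_ge0 (P : 'I_n -> R) : simplex P -> 0 <= KL P Q.
Proof.
move=> P_simplex; apply: (le_trans _ (KL_ge_hellinger _ P_simplex)).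
by apply: sumr_ge0 => i _; exact: sqr_ge0.
Qed.

Lemma KL_self : KL Q Q = 0.
Proof. by apply: big1 => i _; rewrite divff ?ln1 ?mulr0 // gt_eqF. Qed.

Lemma KL_ge_coord_gap (P : 'I_n -> R) (j : 'I_n) (c : R) :
  simplex P -> P j <= c * Q j -> c < 1 -> (1 - c) ^+ 2 * Q j / 4 <= KL P Q.
Proof.
move=> P_simplex PcQ c_lt1; apply: (le_trans _ (KL_ge_hellinger _ P_simplex)).
rewrite (bigD1 j) //= -[X in X <= _]addr0; apply: lerD.
  by apply: sqr_sqrt_gap_ge => //; case: P_simplex.
by apply: sumr_ge0 => i _; exact: sqr_ge0.
Qed.

End KullbackLeibler.

Section SeparationDistance.
Context {R : realType} {n : nat} {P Q : 'I_n -> R}.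
Hypotheses (P_ge0 : forall i, 0 <= P i) (Q_gt0 : forall i, 0 < Q i).

Let ratios := [set 1 - P i / Q i | i in [set: 'I_n]].

Let ratios_le1 : ubound ratios 1.
Proof. by move=> _ [i _ <-]; rewrite lerBlDr lerDl divr_ge0 // ltW. Qed.

Lemma kappa_ge (i : 'I_n) : 1 - P i / Q i <= kappa P Q.
Proof.
apply: sup_upper_bound; last by exists i.
by split; [exists (1 - P i / Q i); exists i | exists 1; exact: ratios_le1].
Qed.

Hypothesis n_gt0 : (0 < n)%N.

Let ratios_neq0 : ratios !=set0.
Proof.
by exists (1 - P (Ordinal n_gt0) / Q (Ordinal n_gt0)); exists (Ordinal n_gt0).
Qed.

Lemma kappa_le1 : kappa P Q <= 1.
Proof. exact: ge_sup ratios_neq0 ratios_le1. Qed.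

Lemma kappa_gtP (a : R) : a < kappa P Q -> exists j, a < 1 - P j / Q j.
Proof. by move=> /(sup_gt ratios_neq0)[_ [j _ <-]]; exists j. Qed.

Lemma kappa_ge0 : \sum_(i < n) P i = 1 -> \sum_(i < n) Q i = 1 ->
  0 <= kappa P Q.
Proof.
move=> sumP1 sumQ1.
have [i PQ] : exists i, P i <= Q i.
  apply: contrapT => /forallNP PgtQ.
  suff : \sum_(i < n) Q i < \sum_(i < n) P i by rewrite sumP1 sumQ1 ltxx.
  apply: ltr_sum => [|i _]; last by rewrite ltNge; apply/negP/PgtQ.
  by apply/hasP; exists (Ordinal n_gt0); rewrite ?mem_index_enum.
by apply: le_trans (kappa_ge i); rewrite subr_ge0 ler_pdivrMr // mul1r.
Qed.

End SeparationDistance.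

Section OptimalDivergence.
Context {R : realType} {n : nat} {Q0 Phat : 'I_n -> R}.
Hypotheses (Q0_gt0 : forall i, 0 < Q0 i) (sumQ0 : \sum_(i < n) Q0 i = 1).
Hypothesis Phat_simplex : simplex Phat.

Lemma ambig_self (a : R) : 0 <= a < 1 -> ambig Phat a Phat.
Proof.
move=> /andP[a_ge0 a_lt1]; split=> // i.
have Phat_ge0 := Phat_simplex.1 i.
by rewrite ler_pdivlMr ?subr_gt0 //; nra.
Qed.

Lemma Dstar_le0 (a : R) : kappa Phat Q0 <= a -> a < 1 -> Dstar Phat Q0 a <= 0.
Proof.
move=> kappa_le_a a_lt1.
have Q0_ambig : ambig Phat a Q0.
  split=> [|i]; first by split=> // i; exact: ltW.
  have := le_trans (kappa_ge Phat_simplex.1 Q0_gt0 i) kappa_le_a.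
  by rewrite ler_pdivlMr ?subr_gt0 // lerBlDr -lerBlDl ler_pdivlMr // mulrC.
rewrite -(KL_self Q0_gt0); apply: ge_inf; last by exists Q0.
by exists 0 => _ [P [P_simplex _] <-]; exact: KL_ge0.
Qed.

Hypothesis n_gt0 : (0 < n)%N.

Lemma Dstar_gt0 (a : R) : 0 <= a -> a < kappa Phat Q0 ->
  exists2 d, 0 < d & d <= Dstar Phat Q0 a.
Proof.
move=> a_ge0 a_lt_kappa.
have a_lt1 := lt_le_trans a_lt_kappa (kappa_le1 Phat_simplex.1 Q0_gt0 n_gt0).
have [j a_lt_ratio] := kappa_gtP n_gt0 _ a_lt_kappa.
have Q0j_gt0 := Q0_gt0 j.
set c := Phat j / ((1 - a) * Q0 j).
have c_lt1 : c < 1.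
  have : Phat j / Q0 j < 1 - a by lra.
  by rewrite ltr_pdivrMr // ltr_pdivrMr ?mulr_gt0 ?subr_gt0 // mul1r.
have cQ0 : c * Q0 j = Phat j / (1 - a).
  by rewrite /c; field; rewrite !gt_eqF ?subr_gt0.
exists ((1 - c) ^+ 2 * Q0 j / 4).
  by rewrite divr_gt0 // mulr_gt0 // exprn_gt0 // subr_gt0.
apply: lb_le_inf.
  by exists (KL Phat Q0), Phat => //; apply: ambig_self; rewrite a_ge0.
by move=> _ [P [P_simplex P_le] <-]; apply: KL_ge_coord_gap; rewrite ?cQ0.
Qed.

End OptimalDivergence.

Lemma rhsL_gt0 {R : realType} (n : nat) {eps p a : R} :
  0 < eps < 1 -> 0 < p -> a < 1 -> 0 < rhsL n eps p a.
Proof.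
move=> /andP[eps_gt0 eps_lt1] p_gt0 a_lt1.
have s_gt0 : 0 < p * (1 - a) by rewrite mulr_gt0 ?subr_gt0.
have first_gt0 : 0 < (p * (1 - a))^-1 * ln eps^-1.
  by rewrite mulr_gt0 ?invr_gt0 ?ln_gt0 // invf_gt1.
have second_ge0 : 0 <= 2 * n%:R / (p * (1 - a)) * ln (p * (1 - a) + 1).
  by rewrite mulr_ge0 ?divr_ge0 ?mulr_ge0 ?ln_ge0 ?ler0n ?ltW //; lra.
rewrite /rhsL; lra.
Qed.

Lemma rhsL_near_le {R : realType} (n : nat) {eps a d : R} :
  0 < eps < 1 -> a < 1 -> 0 < d -> \forall p \near +oo, rhsL n eps p a <= d.
Proof.
move=> /andP[eps_gt0 eps_lt1] a_lt1 d_gt0.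
have L_ge0 : 0 <= ln eps^-1 by rewrite ln_ge0 // invf_ge1 // ltW.
have N_ge0 : 0 <= 2 * n%:R :> R by rewrite mulr_ge0.
have [S [_ S_le]] := ln1D_div_near_le _ _ _ L_ge0 N_ge0 d_gt0.
have a1_gt0 : 0 < 1 - a by rewrite subr_gt0.
exists (S / (1 - a)); split; first by rewrite num_real.
by move=> p; rewrite ltr_pdivrMr // => /S_le.
Qed.

Section AlphaL.
Context {R : realType} {n : nat} {eps : R} {Q0 Phat : 'I_n -> R}.
Hypotheses (eps01 : 0 < eps < 1) (n_gt0 : (0 < n)%N).
Hypotheses (Q0_gt0 : forall i, 0 < Q0 i) (sumQ0 : \sum_(i < n) Q0 i = 1).
Hypothesis Phat_simplex : simplex Phat.

Lemma alphaL_ge0 (p : R) : 0 <= alphaL Phat Q0 eps p.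
Proof. by apply: sup_ge0 => a [/andP[]]. Qed.

Lemma alphaL_le_kappa (p : R) : 0 < p -> alphaL Phat Q0 eps p <= kappa Phat Q0.
Proof.
move=> p_gt0; apply: sup_le_ub_ge0.
  by apply: kappa_ge0 => //; [exact: Phat_simplex.1 | exact: Phat_simplex.2].
move=> a [/andP[a_ge0 a_lt1] rhs_le_D]; rewrite leNgt; apply/negP => kappa_lt_a.
have := Dstar_le0 Q0_gt0 sumQ0 Phat_simplex _ (ltW kappa_lt_a) a_lt1.
have := rhsL_gt0 n eps01 p_gt0 a_lt1; lra.
Qed.

Lemma alphaL_near_ge (a : R) : a < kappa Phat Q0 ->
  \forall p \near +oo, a <= alphaL Phat Q0 eps p.
Proof.
move=> a_lt_kappa; have [a_lt0|a_ge0] := ltP a 0.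
  by apply: nearW => p; exact: le_trans (ltW a_lt0) (alphaL_ge0 p).
have a_lt1 := lt_le_trans a_lt_kappa (kappa_le1 Phat_simplex.1 Q0_gt0 n_gt0).
have [d d_gt0 d_le_D] :=
  Dstar_gt0 Q0_gt0 sumQ0 Phat_simplex n_gt0 _ a_ge0 a_lt_kappa.
apply: filterS (rhsL_near_le n eps01 a_lt1 d_gt0) => p rhs_le_d.
have a_adm : [set b : R | 0 <= b < 1 /\ rhsL n eps p b <= Dstar Phat Q0 b] a.
  by split; [rewrite a_ge0 | exact: le_trans d_le_D].
apply: (sup_upper_bound _ a_adm); split; first by exists a.
by exists 1 => b [/andP[_ /ltW]].
Qed.

End AlphaL.

Theorem theorem6 (R : realType) (n : nat) (eps : R) (Q0 Phat : 'I_n -> R) :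
  (2 <= n)%N -> 0 < eps < 1 ->
  simplex Q0 -> (forall i, 0 < Q0 i) -> simplex Phat ->
  (forall p : R, 0 < p -> alphaL Phat Q0 eps p <= kappa Phat Q0) /\
  (alphaL Phat Q0 eps p @[p --> +oo] --> kappa Phat Q0).
Proof.
move=> n_ge2 eps01 [_ sumQ0] Q0_gt0 Phat_simplex.
have n_gt0 : (0 < n)%N by exact: leq_trans n_ge2.
have le_kappa := alphaL_le_kappa eps01 n_gt0 Q0_gt0 sumQ0 Phat_simplex.
split=> //; apply: cvg_from_below => [|a]; last exact: alphaL_near_ge.
by apply: filterS (nbhs_pinfty_gt (num_real 0)); exact: le_kappa.
Qed.
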